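(* The numbers $\operatorname{op}_{n,n-1}(123)$ satisfy $\operatorname{op}_{2,1}(123)=1$ and, for all $n>2$, $$\operatorname{op}_{n,n-1}(123) = \frac{(4n-6)(n-1)^2}{(n-2)^2(n+1)}\operatorname{op}_{n-1,n-2}(123).$$
   Context: An ordered set partition of $[n]$ into $k$ blocks is a sequence $B_1/B_2/\cdots/B_k$ of nonempty, pairwise disjoint subsets of $[n]$ whose union is $[n]$; the order of the blocks matters, but not the order of elements within a block. For a permutation $\rho=\rho_1\cdots\rho_m\in\mathcal{S}_m$, an ordered partition $B_1/\cdots/B_k$ contains $\rho$ if there are block indices $i_1<i_2<\cdots<i_m$ and elements $b_j\in B_{i_j}$ such that $b_1\cdots b_m$ is order-isomorphic to $\rho$ (i.e. $b_a<b_c$ iff $\rho_a<\rho_c$); otherwise it avoids $\rho$. $\operatorname{op}_{n,k}(\rho)$ denotes the number of ordered partitions of $[n]$ into $k$ blocks that avoid $\rho$. *)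

From mathcomp Require Import all_boot all_order all_algebra all_fingroup.
Set Implicit Arguments. Unset Strict Implicit. Unset Printing Implicit Defensive.

(* An ordered set partition of [n] = {0,..,n-1} (order-isomorphic to {1..n})
   into k blocks B_0/.../B_{k-1} is encoded by the block-assignment map
   f : 'I_n -> 'I_k, with B_i = f^{-1}(i); nonemptiness of every block is
   surjectivity of f. *)
Definition is_ordered_partition (n k : nat) (f : {ffun 'I_n -> 'I_k}) : bool :=
  [forall i : 'I_k, exists x : 'I_n, f x == i].

Definition contains_perm (n k m : nat) (rho : 'S_m) (f : {ffun 'I_n -> 'I_k}) : bool :=
  [exists b : {ffun 'I_m -> 'I_n},
    [forall a : 'I_m, forall c : 'I_m,
      ((a < c) ==> (f (b a) < f (b c))) && ((b a < b c) == (rho a < rho c))]].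

Definition avoids_perm (n k m : nat) (rho : 'S_m) (f : {ffun 'I_n -> 'I_k}) : bool :=
  ~~ contains_perm rho f.

Definition op (n k m : nat) (rho : 'S_m) : nat :=
  #|[set f : {ffun 'I_n -> 'I_k} | is_ordered_partition f && avoids_perm rho f]|.

Definition p123 : 'S_3 := 1%g.

(* Record an ordered partition of [n] into k blocks by its word of block indices
   f 0, ..., f (n-1).  It avoids 123 iff this word has no strictly increasing
   subsequence of length 3, and the partitions of [k+1] into k blocks are exactly
   the arrangements of the letters 0, ..., k-1 plus one repeated letter.

   Read left to right, a word avoids 123 iff no letter exceeds the least letter
   that was itself preceded by a smaller one.  For distinct letters, the number of
   avoiding arrangements of the unread letters therefore only depends on the
   number p of them at most the current minimum and the number q between the
   minimum and that threshold.  Choosing the first letter gives a ballot-type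
   recurrence solved by C(2p+q, p) (q+1)/(p+q+1); the same analysis with one
   repeated letter has an explicit rational solution, which at p = k, q = 0 gives
     op_{k+1,k}(123) = C(2k, k) 3k^2 / ((k+1)(k+2)),
   and the recurrence is the ratio of two consecutive values. *)

From mathcomp Require Import all_boot all_order all_algebra all_fingroup.
From mathcomp Require Import zify ring lra.
Import GRing.Theory Num.Theory.

Lemma nat_of_bool_inj : injective nat_of_bool.
Proof. by case; case. Qed.

Lemma all_rem_mem (T : eqType) (P : pred T) x (s : seq T) :
  x \in s -> P x -> all P (rem x s) = all P s.
Proof. by move=> s_x Px; rewrite (perm_all _ (perm_to_rem s_x)) /= Px. Qed.

Lemma count_big {T : Type} (P : pred T) (s : seq T) : count P s = \sum_(y <- s) P y.
Proof. by rewrite -sumn_count sumnE big_map. Qed.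

Lemma count_le_mid_size (s : seq nat) a b : all (fun y => y <= b) s ->
  count (fun y => y <= a) s + count (fun y => a < y <= b) s = size s.
Proof.
move=> s_le_b; rewrite -count_predT !count_big -big_split.
by apply: eq_big_seq => y /(allP s_le_b) /= le_yb; lia.
Qed.

Lemma sorted_ltn_sort (s : seq nat) : uniq s -> sorted ltn (sort leq s).
Proof.
by move=> us; rewrite ltn_sorted_uniq_leq sort_uniq us sort_sorted //; exact: leq_total.
Qed.

Lemma big_rank (s : seq nat) (G : nat -> nat) : uniq s ->
  \sum_(x <- s) G (count (fun y => y < x) s) = \sum_(j < size s) G j.
Proof.
have sorted_rank t : sorted ltn t ->
    \sum_(x <- t) G (count (fun y => y < x) t) = \sum_(j < size t) G j.
  elim: t G => [|y t IHt] G /=; first by rewrite big_nil big_ord0.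
  move=> path_yt; have t_gt_y := order_path_min ltn_trans path_yt.
  rewrite big_cons big_ord_recl /= ltnn add0n.
  have -> : count (fun z => z < y) t = 0.
    apply/eqP; rewrite -leqn0 leqNgt -has_count; apply/hasPn => z /(allP t_gt_y).
    by move=> /ltnW; rewrite leqNgt.
  rewrite -(IHt (fun j => G j.+1)) ?(path_sorted path_yt) //; congr (_ + _).
  by apply: eq_big_seq => z /(allP t_gt_y) /= ->.
move=> us; have sort_s : perm_eq (sort leq s) s by rewrite perm_sort.
have sorted_s := sorted_ltn_sort _ us.
rewrite -(perm_size sort_s) -sorted_rank // (perm_big _ sort_s).
by apply: eq_bigr => x _; rewrite (seq.permP sort_s).
Qed.

Lemma count_max (s : seq nat) : uniq s -> s != [::] ->
  count (fun x => all (fun y => y <= x) s) s = 1.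
Proof.
move=> us s_nil; have sort_s : perm_eq (sort leq s) s by rewrite perm_sort.
have sorted_s := sorted_ltn_sort _ us.
rewrite -(seq.permP sort_s) (eq_count (a2 := fun x => all (fun y => y <= x) (sort leq s)));
  last by move=> x; apply: perm_all; rewrite perm_sym.
have : sort leq s != [::] by rewrite -size_eq0 (perm_size sort_s) size_eq0.
elim: (sort leq s) sorted_s => [|y t IHt] //= path_yt _.
have t_gt_y := order_path_min ltn_trans path_yt.
case: t IHt path_yt t_gt_y => [|z t] IHt path_yt t_gt_y; first by rewrite /= leqnn.
rewrite /= leqnn /= leqNgt (allP t_gt_y z (mem_head _ _)) /= add0n.
rewrite -IHt ?(path_sorted path_yt) //= ltnW ?(allP t_gt_y z (mem_head _ _)) //.
congr (_ + _); apply: eq_in_count => x t_x /=.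
by rewrite ltnW // (allP t_gt_y x (@mem_behead _ (z :: t) _ t_x)).
Qed.

Lemma big_small_rank_large_max (s : seq nat) a b (G : nat -> nat) (c : nat) :
  uniq s -> all (fun x => x <= b) s ->
  \sum_(x <- s) (if x <= a then G (count (fun y => y < x) s)
                 else all (fun y => y <= x) s * c)
  = \sum_(j < count (fun x => x <= a) s) G j + (0 < count (fun x => a < x <= b) s) * c.
Proof.
move=> us s_le_b; rewrite (bigID (fun x => x <= a)) /=; congr (_ + _).
  rewrite -big_filter -size_filter -(big_rank _ G (filter_uniq _ us)).
  apply: eq_big_seq => x; rewrite mem_filter => /andP[le_xa _]; rewrite le_xa.
  congr G; rewrite count_filter; apply: eq_count => y /=.
  by apply: nat_of_bool_inj; lia.
rewrite -big_filter; set l := filter _ s.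
rewrite (eq_big_seq (fun x => all (fun y => y <= x) l * c)); last first.
  move=> x; rewrite mem_filter -ltnNge => /andP[lt_ax _]; rewrite leqNgt lt_ax /=.
  rewrite all_filter; congr (nat_of_bool _ * _); apply: eq_all => y /=.
  by case: (leqP y a) => //= le_ya; rewrite (leq_trans le_ya (ltnW lt_ax)).
have -> : count (fun x => a < x <= b) s = size l.
  rewrite size_filter; apply: eq_in_count => y /(allP s_le_b) /= le_yb.
  by apply: nat_of_bool_inj; lia.
have ul : uniq l by exact: filter_uniq.
rewrite -big_distrl /=; congr (_ * _).
rewrite -(count_big (fun x => all (fun y => y <= x) l)).
by case: l ul => [|z l] ul //; rewrite count_max.
Qed.

Lemma card_set_count (T : finType) (P : pred T) : #|[set x | P x]| = count P (enum T).
Proof. by rewrite -sum1dep_card sum1_count enumT. Qed.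

Lemma perm_eq_cat_subset (T : eqType) (s t : seq T) : uniq s -> {subset s <= t} ->
  exists r, perm_eq t (s ++ r).
Proof.
elim: s t => [|x s IHs] t /=; first by exists t.
move=> /andP[s_x us] sub_st.
have t_x : x \in t by apply: sub_st; rewrite mem_head.
have sub_rem : {subset s <= rem x t}.
  move=> y s_y; apply: rem_mem; last by apply: sub_st; rewrite inE s_y orbT.
  by apply: contraNneq s_x => <-.
have [r perm_r] := IHs _ us sub_rem.
by exists r; rewrite (perm_trans (perm_to_rem t_x)) // perm_cons.
Qed.

Lemma uniq_flatten_permutations_cons (T : eqType) (s ds : seq T) : uniq ds ->
  uniq (flatten [seq permutations (d :: s) | d <- ds]).
Proof.
elim: ds => [|d ds IHds] //= /andP[ds_d uds].
rewrite cat_uniq permutations_uniq IHds // andbT.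
apply/hasPn => w /flattenP[_ /mapP[d' ds_d' ->]]; rewrite !mem_permutations => perm_w.
apply/negP => perm_dw.
have perm_dd' : perm_eq (d :: s) (d' :: s) by rewrite -(permPl perm_dw).
have := seq.permP perm_dd' (pred1 d).
rewrite /= eqxx => /addIn /nat_of_bool_inj /esym /eqP eq_d'd.
by rewrite -eq_d'd ds_d' in ds_d.
Qed.

(* [nav p q] counts the 123-avoiding arrangements of distinct unread letters,
   p of them at most the current minimum a and q in (a, b] (see
   [nperm_avoid_uniq]); [nav_rep p q] is the same count when one of the letters
   is repeated (see [nperm_avoid_rep_uniq]). *)
Fixpoint nav (p q : nat) {struct p} : nat :=
  if p is p'.+1 then
    (fix nav_p q := if q is q'.+1 then nav_p q' + nav p' q'.+2 else nav p' 1) q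
  else 1.

Lemma nav0 q : nav 0 q = 1. Proof. by []. Qed.
Lemma navS0 p : nav p.+1 0 = nav p 1. Proof. by []. Qed.
Lemma navSS p q : nav p.+1 q.+1 = nav p.+1 q + nav p q.+2. Proof. by []. Qed.
Arguments nav : simpl never.

Fixpoint nav_rep (p q : nat) {struct p} : nat :=
  if p is p'.+1 then
    (fix nav_rep_p q := if q is q'.+1 then
       nav_rep_p q' + nav p q'.+1 + nav p q' + nav_rep p' q'.+2 else nav_rep p' 1) q
  else q.

Lemma nav_rep0 q : nav_rep 0 q = q. Proof. by []. Qed.
Lemma nav_repS0 p : nav_rep p.+1 0 = nav_rep p 1. Proof. by []. Qed.
Lemma nav_repSS p q :
  nav_rep p.+1 q.+1 = nav_rep p.+1 q + nav p.+1 q.+1 + nav p.+1 q + nav_rep p q.+2.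
Proof. by []. Qed.
Arguments nav_rep : simpl never.

Lemma sum_ord_shift (F : nat -> nat -> nat) p q :
  \sum_(i < p.+1) F i (p.+1 - i + q) = \sum_(i < p.+1) F i (p - i + q.+1).
Proof. by apply: eq_bigr => i _; congr F; have := ltn_ord i; lia. Qed.

Lemma nav_sum p q : \sum_(j < p.+1) nav j (p - j + q) = nav p q.+1.
Proof.
elim: p q => [|p IHp] q; first by rewrite big_ord1.
rewrite big_ord_recr /= subnn add0n.
rewrite (sum_ord_shift (fun i r => nav i r)) IHp.
by rewrite navSS addnC.
Qed.

Lemma nav_rec p q : 0 < p + q ->
  nav p q = \sum_(j < p) nav j (p.-1 - j + q) + (0 < q) * nav p q.-1.
Proof.
case: p => [|p] /=; first by case: q => // q _; rewrite big_ord0.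
move=> _; rewrite nav_sum; case: q => [|q]; first by rewrite navS0 addn0.
by rewrite navSS mul1n addnC.
Qed.

Lemma nav_rep_sum p q :
  \sum_(j < p.+1) (nav j.+1 (p - j + q) + nav_rep j (p - j + q)) + nav p q.+1
  = nav_rep p q.+1 + nav p.+1 q.
Proof.
elim: p q => [|p IHp] q.
  by rewrite big_ord1 /= subnn add0n !nav_rep0 !nav0; lia.
rewrite big_ord_recr /= subnn add0n.
rewrite (sum_ord_shift (fun i r => nav i.+1 r + nav_rep i r)).
have := IHp q.+1; have := nav_repSS p q; have := navSS p q; lia.
Qed.

Lemma nav_rep_rec p q :
  nav_rep p q = \sum_(j < p) (nav j.+1 (p.-1 - j + q) + nav_rep j (p.-1 - j + q))
                + (0 < q) * (nav p q + nav_rep p q.-1).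
Proof.
case: p => [|p] /=.
  by rewrite big_ord0 add0n; case: q => [|q] //; rewrite !nav_rep0 nav0 /=; lia.
have := nav_rep_sum p q; case: q => [|q] /=.
  by rewrite nav_repS0 navS0; lia.
by rewrite nav_repSS navSS; lia.
Qed.

(* The state (a, b): a is the least letter read so far, b the least letter read
   that exceeds an earlier one; both start at the alphabet size. *)
Fixpoint avoids123_from (a b : nat) (w : seq nat) : bool :=
  if w is x :: w' then
    (x <= b) && (if x <= a then avoids123_from x b w' else avoids123_from a x w')
  else true.

Fixpoint has_rise_above (lo : nat) (w : seq nat) : bool :=
  if w is x :: w' then ((lo < x) && has (fun y => x < y) w') || has_rise_above lo w'
  else false.

Fixpoint has_inc3 (w : seq nat) : bool :=
  if w is x :: w' then has_rise_above x w' || has_inc3 w' else false.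

Lemma has_rise_above_mono lo lo' w :
  lo' <= lo -> has_rise_above lo w -> has_rise_above lo' w.
Proof.
move=> le_lo; elim: w => [|x w IHw] //= /orP[/andP[lo_x x_w]|/IHw ->].
  by rewrite (leq_ltn_trans le_lo lo_x) x_w.
by rewrite orbT.
Qed.

Lemma has_rise_above_has lo w : has_rise_above lo w -> has (fun y => lo < y) w.
Proof.
elim: w => [|x w IHw] //= /orP[/andP[-> _]|/IHw ->] //.
by rewrite orbT.
Qed.

Lemma avoids123_fromE a b w : a <= b ->
  avoids123_from a b w =
  [&& all (fun y => y <= b) w, ~~ has_rise_above a w & ~~ has_inc3 w].
Proof.
elim: w a b => [|x w IHw] a b le_ab //=.
case: (leqP x a) => [le_xa | lt_ax].
  rewrite (leq_trans le_xa le_ab) IHw /=; last exact: leq_trans le_xa le_ab.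
  case: (has_rise_above x w) (@has_rise_above_mono a x w le_xa) => /=.
    by rewrite !andbF.
  by case: (has_rise_above a w) => [/(_ isT)|].
rewrite IHw; last exact: ltnW.
case le_xb: (x <= b) => //=.
case w_le_x: (all (fun y => y <= x) w) => /=; last first.
  have -> : has (fun y => x < y) w.
    by apply/hasP; move/negbT: w_le_x => /allPn[y w_y]; rewrite -ltnNge; exists y.
  by rewrite andbF.
have no_above : has (fun y => x < y) w = false.
  by apply/negbTE/hasPn => y /(allP w_le_x) /=; rewrite -leqNgt.
have -> : has_rise_above x w = false.
  by apply/negbTE; apply: contraFN no_above => /has_rise_above_has.
have -> : all (fun y => y <= b) w.
  by apply/allP => y /(allP w_le_x) /= le_yx; apply: leq_trans le_yx le_xb.
by rewrite no_above.
Qed.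

Lemma avoids123_from_le a b w : avoids123_from a b w -> all (fun y => y <= b) w.
Proof.
elim: w a b => [|x w IHw] a b //= /andP[le_xb].
case: (x <= a) => /IHw; rewrite le_xb //= => w_le_x.
by apply/allP => y /(allP w_le_x) /= le_yx; apply: leq_trans le_yx le_xb.
Qed.

Lemma has_rise_aboveP lo w :
  reflect (exists i j, [/\ i < j, j < size w, lo < nth 0 w i & nth 0 w i < nth 0 w j])
          (has_rise_above lo w).
Proof.
elim: w => [|x w IHw] /=; first by apply: ReflectF => -[i [j [_ + _ _]]].
apply: (iffP orP).
  case=> [/andP[lo_x /hasP[y w_y lt_xy]] | /IHw[i [j [lt_ij lt_j lo_i lt_wij]]]].
    exists 0, (index y w).+1; split => //=; first by rewrite ltnS index_mem.
    by rewrite nth_index.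
  by exists i.+1, j.+1; split.
case=> [[|i] [[|j] [lt_ij lt_j lo_i lt_wij]]] //=.
  by left; rewrite lo_i /=; apply/hasP; exists (nth 0 w j); rewrite ?mem_nth.
by right; apply/IHw; exists i, j; split.
Qed.

Lemma has_inc3P w :
  reflect (exists i j l, [/\ i < j, j < l, l < size w,
                             nth 0 w i < nth 0 w j & nth 0 w j < nth 0 w l])
          (has_inc3 w).
Proof.
elim: w => [|x w IHw] /=; first by apply: ReflectF => -[i [j [l [_ _ + _ _]]]].
apply: (iffP orP).
  case=> [/has_rise_aboveP[i [j [? ? ? ?]]] | /IHw[i [j [l [? ? ? ? ?]]]]].
    by exists 0, i.+1, j.+1; split.
  by exists i.+1, j.+1, l.+1; split.
case=> [[|i] [[|j] [[|l] [lt_ij lt_jl lt_l lt_wij lt_wjl]]]] //=.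
  by left; apply/has_rise_aboveP; exists j, l; split.
by right; apply/IHw; exists i, j, l; split.
Qed.

Definition nperm_avoid (a b : nat) (s : seq nat) : nat :=
  count (avoids123_from a b) (permutations s).

Definition nperm_avoid_rep (a b : nat) (s : seq nat) : nat :=
  \sum_(d <- s) nperm_avoid a b (d :: s).

Lemma nperm_avoid_rec a b s : 0 < size s ->
  nperm_avoid a b s = \sum_(x <- undup s) ((x <= b) *
     (if x <= a then nperm_avoid x b (rem x s) else nperm_avoid a x (rem x s))).
Proof.
move=> s_gt0; rewrite /nperm_avoid (seq.permP (permutationsE s_gt0)).
rewrite /allpairs_dep count_flatten sumnE !big_map; apply: eq_bigr => x _.
rewrite count_map; set P := permutations _.
rewrite [LHS](eq_count (a2 := fun w => (x <= b) &&
           (if x <= a then avoids123_from x b w else avoids123_from a x w))) //.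
case: (x <= b); last by rewrite mul0n; elim: P.
by rewrite mul1n; case: (x <= a).
Qed.

Lemma nperm_avoid_eq0 a b s : ~~ all (fun y => y <= b) s -> nperm_avoid a b s = 0.
Proof.
move=> s_gt_b; apply/eqP; rewrite -leqn0 leqNgt -has_count; apply/hasPn => w.
rewrite mem_permutations => perm_ws; apply: contra s_gt_b => /avoids123_from_le.
by rewrite (perm_all _ perm_ws).
Qed.

Lemma nperm_avoid_rep_eq0 a b s :
  ~~ all (fun y => y <= b) s -> nperm_avoid_rep a b s = 0.
Proof.
move=> s_gt_b; apply: big1 => d _; apply: nperm_avoid_eq0.
by apply: contra s_gt_b => /andP[].
Qed.

Lemma nperm_avoid_rep_rec a b s : uniq s ->
  nperm_avoid_rep a b s = \sum_(x <- s) ((x <= b) *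
     (if x <= a then nperm_avoid x b s + nperm_avoid_rep x b (rem x s)
      else nperm_avoid a x s + nperm_avoid_rep a x (rem x s))).
Proof.
move=> us; rewrite /nperm_avoid_rep.
transitivity (\sum_(d <- s) \sum_(x <- s) ((x <= b) *
    (if x <= a then nperm_avoid x b (rem x (d :: s)) else nperm_avoid a x (rem x (d :: s))))).
  by apply: eq_big_seq => d s_d; rewrite nperm_avoid_rec //= s_d (undup_id us).
rewrite exchange_big; apply: eq_big_seq => x s_x; rewrite -big_distrr /=; congr (_ * _).
have split_d (W : seq nat -> nat) :
    \sum_(d <- s) W (rem x (d :: s)) = W s + \sum_(d <- rem x s) W (d :: rem x s).
  rewrite (bigD1_seq x) //= eqxx; congr (_ + _).
  by rewrite (rem_filter x us) big_filter; apply: eq_bigr => d /negbTE /= ->.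
by case: (x <= a); rewrite split_d.
Qed.

Section ReadLetter.

Variables (s : seq nat) (a b x : nat).
Hypotheses (us : uniq s) (s_x : x \in s) (s_le_b : all (fun y => y <= b) s).

Local Notation p := (count (fun y => y <= a) s).
Local Notation q := (count (fun y => a < y <= b) s).

Let count_eq_x : count (fun y => y == x) s = 1.
Proof. by have := count_uniq_mem x us; rewrite s_x. Qed.

Lemma count_le_mem : count (fun y => y <= x) s = (count (fun y => y < x) s).+1.
Proof.
rewrite -addn1 -count_eq_x !count_big -big_split.
by apply: eq_bigr => y _ /=; case: ltngtP.
Qed.

Lemma count_above_small : x <= a ->
  count (fun y => x < y <= b) s = p.-1 - count (fun y => y < x) s + q.
Proof.
move=> le_xa.
have : count (fun y => y < x) s + count (fun y => y == x) s
       + count (fun y => x < y <= b) s = p + q.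
  rewrite !count_big -!big_split.
  by apply: eq_big_seq => y /(allP s_le_b) /= le_yb; lia.
have : count (fun y => y <= x) s <= p.
  by apply: sub_count => y /= le_yx; apply: leq_trans le_yx le_xa.
by rewrite count_eq_x count_le_mem; lia.
Qed.

Lemma count_mid_max : all (fun y => y <= x) s -> count (fun y => a < y <= x) s = q.
Proof.
move=> s_le_x; have le_xb : x <= b := allP s_le_b x s_x.
apply: eq_in_count => y /(allP s_le_x) /= le_yx.
by apply: nat_of_bool_inj; lia.
Qed.

Lemma count_le_rem : count (fun y => y <= x) (rem x s) = count (fun y => y < x) s.
Proof. by rewrite count_rem s_x leqnn count_le_mem subn1. Qed.

Lemma count_above_rem_small : x <= a ->
  count (fun y => x < y <= b) (rem x s) = p.-1 - count (fun y => y < x) s + q.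
Proof. by move=> le_xa; rewrite count_rem s_x ltnn subn0 count_above_small. Qed.

Lemma count_le_rem_large : a < x -> count (fun y => y <= a) (rem x s) = p.
Proof. by move=> lt_ax; rewrite count_rem s_x leqNgt lt_ax subn0. Qed.

Lemma count_mid_rem_max : a < x -> all (fun y => y <= x) s ->
  count (fun y => a < y <= x) (rem x s) = q.-1.
Proof.
by move=> lt_ax s_le_x; rewrite count_rem s_x lt_ax leqnn count_mid_max // subn1.
Qed.

End ReadLetter.

Lemma nperm_avoid_uniq s a b : uniq s -> a <= b -> all (fun y => y <= b) s ->
  nperm_avoid a b s = nav (count (fun y => y <= a) s) (count (fun y => a < y <= b) s).
Proof.
elim: {s}(size s).+1 {-2}s (ltnSn (size s)) a b => // n IHn s lt_sn a b us le_ab s_le_b.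
have [-> // | s_nil] := eqVneq s [::].
have s_gt0 : 0 < size s by rewrite lt0n size_eq0.
have IHrem x a' b' : x \in s -> a' <= b' -> all (fun y => y <= b') (rem x s) ->
    nperm_avoid a' b' (rem x s) = nav (count (fun y => y <= a') (rem x s))
                                      (count (fun y => a' < y <= b') (rem x s)).
  move=> s_x; apply: IHn (rem_uniq _ us).
  by rewrite size_rem // -ltnS (ltn_predK s_gt0).
rewrite nperm_avoid_rec // (undup_id us) nav_rec; last first.
  by rewrite count_le_mid_size.
set p := count _ s; set q := count _ s.
(* A first letter x <= a of rank j leaves the profile (j, p.-1 - j + q); a
   larger one is fatal unless it is the largest letter, which leaves (p, q.-1). *)
rewrite -(big_small_rank_large_max _ _ _ (fun j => nav j (p.-1 - j + q))) //.
apply: eq_big_seq => x s_x.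
have le_xb : x <= b := allP s_le_b x s_x.
rewrite le_xb mul1n; case: (leqP x a) => [le_xa | lt_ax].
  rewrite IHrem ?all_rem_mem //.
  by rewrite count_le_rem // (@count_above_rem_small _ a).
have [s_le_x | s_gt_x] := boolP (all (fun y => y <= x) s).
  rewrite IHrem ?all_rem_mem //; last exact: ltnW.
  by rewrite count_le_rem_large // (@count_mid_rem_max _ _ b) // mul1n.
by rewrite nperm_avoid_eq0 ?all_rem_mem // (negbTE s_gt_x).
Qed.

Lemma nperm_avoid_rep_uniq s a b : uniq s -> a <= b -> all (fun y => y <= b) s ->
  nperm_avoid_rep a b s =
  nav_rep (count (fun y => y <= a) s) (count (fun y => a < y <= b) s).
Proof.
elim: {s}(size s).+1 {-2}s (ltnSn (size s)) a b => // n IHn s lt_sn a b us le_ab s_le_b.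
have [-> | s_nil] := eqVneq s [::]; first by rewrite /nperm_avoid_rep big_nil.
have s_gt0 : 0 < size s by rewrite lt0n size_eq0.
have IHrem x a' b' : x \in s -> a' <= b' -> all (fun y => y <= b') (rem x s) ->
    nperm_avoid_rep a' b' (rem x s) = nav_rep (count (fun y => y <= a') (rem x s))
                                              (count (fun y => a' < y <= b') (rem x s)).
  move=> s_x; apply: IHn (rem_uniq _ us).
  by rewrite size_rem // -ltnS (ltn_predK s_gt0).
rewrite nperm_avoid_rep_rec // nav_rep_rec; set p := count _ s; set q := count _ s.
rewrite -(big_small_rank_large_max _ _ _
  (fun j => nav j.+1 (p.-1 - j + q) + nav_rep j (p.-1 - j + q)) (nav p q + nav_rep p q.-1)) //.
apply: eq_big_seq => x s_x.
have le_xb : x <= b := allP s_le_b x s_x.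
rewrite le_xb mul1n; case: (leqP x a) => [le_xa | lt_ax].
  rewrite nperm_avoid_uniq // IHrem ?all_rem_mem //.
  rewrite count_le_mem // count_le_rem // (@count_above_small _ a) //.
  by rewrite (@count_above_rem_small _ a).
have le_ax := ltnW lt_ax.
have [s_le_x | s_gt_x] := boolP (all (fun y => y <= x) s).
  rewrite nperm_avoid_uniq // IHrem ?all_rem_mem // count_le_rem_large //.
  by rewrite (@count_mid_max _ _ b) // (@count_mid_rem_max _ _ b) // mul1n.
by rewrite nperm_avoid_eq0 // nperm_avoid_rep_eq0 ?all_rem_mem.
Qed.

Definition word n k (f : {ffun 'I_n -> 'I_k}) : seq nat := [seq (f i : nat) | i <- enum 'I_n].
Arguments word {n k}.

Section Words.

Context {n k : nat}.
Implicit Type f : {ffun 'I_n -> 'I_k}.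

Lemma size_word f : size (word f) = n.
Proof. by rewrite size_map size_enum_ord. Qed.

Lemma nth_word f (i : 'I_n) : nth 0 (word f) i = f i.
Proof. by rewrite (nth_map i) ?size_enum_ord // nth_ord_enum. Qed.

Lemma word_lt f : all (fun y => y < k) (word f).
Proof. by apply/allP => _ /mapP[i _ ->]. Qed.

Lemma word_inj : injective (@word n k).
Proof.
move=> f g eq_fg; apply/ffunP => i; apply/val_inj.
by rewrite /= -nth_word eq_fg nth_word.
Qed.

Lemma ordered_partitionE f :
  is_ordered_partition f = all (fun j => j \in word f) (iota 0 k).
Proof.
apply/forallP/allP => [f_onto j | word_onto i].
  rewrite mem_iota add0n => /andP[_ lt_jk].
  have /existsP[x /eqP fx] := f_onto (Ordinal lt_jk).
  by apply/mapP; exists x; rewrite ?mem_enum // fx.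
have /word_onto /mapP[x _ fx] : val i \in iota 0 k by rewrite mem_iota add0n ltn_ord.
by apply/existsP; exists x; apply/eqP/val_inj.
Qed.

Lemma contains_perm123E f : contains_perm p123 f = has_inc3 (word f).
Proof.
apply/existsP/has_inc3P => [[e /forallP e_inc] | [i [j [l [lt_ij lt_jl lt_l lt_wij lt_wjl]]]]].
  have e_mono (u v : 'I_3) : u < v -> f (e u) < f (e v) /\ e u < e v.
    move=> lt_uv; have /forallP/(_ v)/andP[f_uv /eqP e_uv] := e_inc u.
    by rewrite /p123 !perm1 lt_uv in f_uv e_uv; rewrite e_uv (implyP f_uv).
  have [f01 e01] := e_mono (@Ordinal 3 0 isT) (@Ordinal 3 1 isT) isT.
  have [f12 e12] := e_mono (@Ordinal 3 1 isT) (@Ordinal 3 2 isT) isT.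
  exists (e (@Ordinal 3 0 isT)), (e (@Ordinal 3 1 isT)), (e (@Ordinal 3 2 isT)).
  by rewrite size_word !nth_word.
rewrite size_word in lt_l.
have lt_jn : j < n by apply: ltn_trans lt_jl lt_l.
have lt_in : i < n by apply: ltn_trans lt_ij lt_jn.
pose I := Ordinal lt_in; pose J := Ordinal lt_jn; pose L := Ordinal lt_l.
rewrite -[i]/(val I) -[j]/(val J) -[l]/(val L) !nth_word in lt_wij lt_wjl.
exists [ffun t : 'I_3 => nth I [:: I; J; L] t].
apply/forallP => u; apply/forallP => v; rewrite /p123 !perm1 !ffunE.
case: u => [[|[|[|u]]] ?] //; case: v => [[|[|[|v]]] ?] //=; rewrite ?ltnn //=.
all: rewrite ?lt_wij ?lt_wjl ?(ltn_trans lt_wij lt_wjl) /=.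
all: by apply/eqP; apply: nat_of_bool_inj; lia.
Qed.

Lemma avoids_perm123E f : avoids_perm p123 f = avoids123_from k k (word f).
Proof.
rewrite /avoids_perm contains_perm123E avoids123_fromE //.
have -> : all (fun y => y <= k) (word f).
  by apply/allP => y /(allP (word_lt f)) /ltnW.
have -> // : has_rise_above k (word f) = false.
apply/negbTE/negP => /has_rise_above_has /hasP[y /(allP (word_lt f)) lt_yk lt_ky].
by move: (ltn_trans lt_yk lt_ky); rewrite ltnn.
Qed.

End Words.

Lemma surjective_words_perm k :
  perm_eq [seq w <- map word (enum {ffun 'I_k.+1 -> 'I_k}) | all (fun j => j \in w) (iota 0 k)]
          (flatten [seq permutations (d :: iota 0 k) | d <- iota 0 k]).
Proof.
apply: uniq_perm.
- by rewrite filter_uniq // map_inj_uniq ?enum_uniq //; exact: word_inj.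
- by rewrite uniq_flatten_permutations_cons // iota_uniq.
move=> w; apply/idP/idP.
  rewrite mem_filter => /andP[w_onto /mapP[f _ w_f]]; subst w.
  have [r perm_r] := perm_eq_cat_subset _ _ _ (iota_uniq 0 k) (allP w_onto).
  have := perm_size perm_r; rewrite size_cat size_iota size_word.
  case: r perm_r => [|d [|e r]] perm_r /= size_r; [lia | | lia].
  have word_d : d \in word f by rewrite (perm_mem perm_r) mem_cat mem_head orbT.
  apply/flattenP; exists (permutations (d :: iota 0 k)).
    by apply/mapP; exists d; rewrite // mem_iota add0n (allP (word_lt f)).
  by rewrite mem_permutations (permPl perm_r) perm_catC.
case/flattenP=> ws /mapP[d]; rewrite mem_iota add0n => /andP[_ lt_dk] ->.
rewrite mem_permutations => perm_w.
have w_lt i : nth 0 w i < k.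
  have [lt_i | ge_i] := ltnP i (size w).
    move: (mem_nth 0 lt_i); rewrite (perm_mem perm_w) inE mem_iota add0n.
    by case/predU1P=> [-> | /andP[]].
  by rewrite nth_default // (leq_ltn_trans (leq0n d) lt_dk).
rewrite mem_filter; apply/andP; split.
  by apply/allP => j iota_j; rewrite (perm_mem perm_w) inE iota_j orbT.
apply/mapP; exists [ffun i : 'I_k.+1 => Ordinal (w_lt i)]; first by rewrite mem_enum.
have size_w : size w = k.+1 by rewrite (perm_size perm_w) /= size_iota.
apply: (@eq_from_nth _ 0); first by rewrite size_word size_w.
by move=> i; rewrite size_w => lt_ik; rewrite (nth_word _ (Ordinal lt_ik)) ffunE.
Qed.

Lemma op123_nperm_avoid_rep k : op k.+1 k p123 = nperm_avoid_rep k k (iota 0 k).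
Proof.
set onto := fun w : seq nat => all (fun j => j \in w) (iota 0 k).
rewrite /op card_set_count (eq_count (a2 := preim word (predI (avoids123_from k k) onto)));
  last by move=> f; rewrite /= ordered_partitionE avoids_perm123E andbC.
rewrite -count_map -count_filter (seq.permP (surjective_words_perm k)).
by rewrite count_flatten sumnE !big_map.
Qed.

Lemma op123_nav_rep k : op k.+1 k p123 = nav_rep k 0.
Proof.
rewrite op123_nperm_avoid_rep nperm_avoid_rep_uniq ?iota_uniq //; last first.
  by apply/allP => x; rewrite mem_iota add0n => /andP[_ /ltnW].
congr nav_rep.
  rewrite -[RHS](size_iota 0 k) -count_predT; apply: eq_in_count => x.
  by rewrite mem_iota add0n => /andP[_ /ltnW ->].
by apply/eqP; rewrite -leqn0 leqNgt -has_count; apply/hasPn => x _ /=; case: ltngtP.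
Qed.

Local Open Scope ring_scope.

Definition factQ (n : nat) : rat := n`!%:R.

Lemma factQ_gt0 n : 0 < factQ n. Proof. by rewrite ltr0n fact_gt0. Qed.

Lemma factQ_pred n m : n = m.+1 -> factQ n = n%:R * factQ m.
Proof. by move=> ->; rewrite /factQ factS natrM. Qed.

Lemma factQ_eq n m : n = m -> factQ n = factQ m. Proof. by move=> ->. Qed.

Lemma factQ_S0 p :
  [/\ factQ (2 * p.+1 + 0) = (2 * p.+1 + 0)%:R * factQ (2 * p + 1),
      factQ (2 * p + 1) = (2 * p + 1)%:R * factQ (2 * p),
      factQ (p.+1 + 0) = (p.+1 + 0)%:R * factQ p,
      factQ (p + 1) = (p + 1)%:R * factQ p
    & factQ p.+1 = p.+1%:R * factQ p].
Proof. by split; apply: factQ_pred; lia. Qed.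

Lemma factQ_SS p q :
  factQ (2 * p.+1 + q.+1) = (2 * p.+1 + q.+1)%:R * factQ (2 * p + q + 2) /\
  factQ (2 * p.+1 + q) = factQ (2 * p + q + 2) /\
  factQ (2 * p + q.+2) = factQ (2 * p + q + 2) /\
  factQ p.+1 = p.+1%:R * factQ p /\
  factQ (p.+1 + q.+1) = (p.+1 + q.+1)%:R * factQ (p + q + 1) /\
  factQ (p.+1 + q) = factQ (p + q + 1) /\
  factQ (p + q.+2) = (p + q.+2)%:R * factQ (p + q + 1).
Proof. by do !split; first [apply: factQ_eq | apply: factQ_pred]; lia. Qed.

Ltac solve_neq0 := repeat (apply/andP; split); apply: lt0r_neq0; lra.

Definition ballot (p q : nat) : rat :=
  factQ (2 * p + q) / (factQ p * factQ (p + q)) * q.+1%:R / (p + q).+1%:R.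

Lemma natr_nav p q : (nav p q)%:R = ballot p q.
Proof.
elim: p q => [|p IHp] q.
  rewrite nav0 /ballot muln0 !add0n /factQ fact0.
  have := factQ_gt0 q; have := ler0n rat q; rewrite /factQ => *.
  by field; solve_neq0.
elim: q => [|q IHq].
  rewrite navS0 IHp /ballot.
  have [-> -> -> -> ->] := factQ_S0 p.
  have := factQ_gt0 p; have := factQ_gt0 (2 * p); have := ler0n rat p => *.
  by field; solve_neq0.
rewrite navSS natrD IHq IHp /ballot.
have [-> [-> [-> [-> [-> [-> ->]]]]]] := factQ_SS p q.
have := factQ_gt0 p; have := factQ_gt0 (2 * p + q + 2); have := factQ_gt0 (p + q + 1).
have := ler0n rat p; have := ler0n rat q => *.
by field; solve_neq0.
Qed.

(* Fitted to the recurrence of [nav_rep]; [natr_nav_rep] verifies it. *)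
Definition nav_rep_closed (p q : nat) : rat :=
  let P := p%:R in let Q := q%:R in
  factQ (2 * p + q) / (factQ p * factQ (p + q))
  * (2 * Q + 3 * Q ^+ 2 + Q ^+ 3 + 8 * P * Q + 8 * P * Q ^+ 2 + 2 * P * Q ^+ 3
     + 3 * P ^+ 2 + 10 * P ^+ 2 * Q + 5 * P ^+ 2 * Q ^+ 2 + 3 * P ^+ 3 + 3 * P ^+ 3 * Q)
  / (p.+1%:R * (p + q).+1%:R * (p + q).+2%:R).

Lemma natr_nav_rep p q : (nav_rep p q)%:R = nav_rep_closed p q.
Proof.
elim: p q => [|p IHp] q.
  rewrite nav_rep0 /nav_rep_closed muln0 !add0n /factQ fact0.
  have := factQ_gt0 q; have := ler0n rat q; rewrite /factQ => *.
  by field; solve_neq0.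
elim: q => [|q IHq].
  rewrite nav_repS0 IHp /nav_rep_closed.
  have [-> -> -> -> ->] := factQ_S0 p.
  have := factQ_gt0 p; have := factQ_gt0 (2 * p); have := ler0n rat p => *.
  by field; solve_neq0.
rewrite nav_repSS !natrD IHq IHp !natr_nav /nav_rep_closed /ballot.
have [-> [-> [-> [-> [-> [-> ->]]]]]] := factQ_SS p q.
have := factQ_gt0 p; have := factQ_gt0 (2 * p + q + 2); have := factQ_gt0 (p + q + 1).
have := ler0n rat p; have := ler0n rat q => *.
by field; solve_neq0.
Qed.

Lemma op123_closed k :
  (op k.+1 k p123)%:R = factQ (2 * k) / factQ k ^+ 2 * (3 * k ^ 2)%:R / (k.+1 * k.+2)%:R.
Proof.
rewrite op123_nav_rep natr_nav_rep /nav_rep_closed !addn0 natrM natrX !natrM.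
have := factQ_gt0 k; have := factQ_gt0 (2 * k); have := ler0n rat k.
by move=> *; field; solve_neq0.
Qed.

Theorem theorem5 :
  op 2 1 p123 = 1%N /\
  (forall n : nat, (2 < n)%N ->
     (op n (n - 1) p123)%:R =
       ((4 * n - 6)%:R * (n - 1)%:R ^+ 2) / ((n - 2)%:R ^+ 2 * (n + 1)%:R)
       * (op (n - 1) (n - 2) p123)%:R :> rat).
Proof.
split; first by rewrite op123_nav_rep.
move=> n lt_2n; have [m -> lt_0m] : exists2 m, n = m.+2 & (0 < m)%N.
  by exists n.-2; lia.
rewrite (_ : 4 * m.+2 - 6 = 4 * m + 2)%N; last lia.
rewrite (_ : m.+2 - 1 = m.+1)%N; last lia.
rewrite (_ : m.+2 - 2 = m)%N; last lia.
rewrite !op123_closed (factQ_pred (2 * m.+1) (2 * m).+1); last lia.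
rewrite (factQ_pred (2 * m).+1 (2 * m)) // (factQ_pred m.+1 m) //.
have := factQ_gt0 m; have := factQ_gt0 (2 * m); have : 1 <= m%:R :> rat by rewrite ler1n.
by move=> *; rewrite !natrM !natrD; field; solve_neq0.
Qed.
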